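(* Let $\hat B$ be the bus susceptance matrix of a connected power network with bus set $\mathcal N$. Let $P^g, P^d \in \mathbb R^{\mathcal N}$ and let $\theta$ satisfy $\hat B\theta = P^g - P^d$. Let $s \neq t$ be two generator buses, let $\Gamma > 0$, and define $\delta$ by $\delta_s = \Gamma$, $\delta_t = -\Gamma$, $\delta_k = 0$ for $k \neq s,t$; let $\hat\theta$ satisfy $\hat B\hat\theta = P^g + \delta - P^d$. Let $k \neq t$ be a bus such that every path in the network between $s$ and $k$ includes $t$. Then $$\hat\theta_k - \hat\theta_t \;=\; \theta_k - \theta_t .$$
   Context: DC power flow model. The network is an undirected connected graph on the bus set $\mathcal N$; each line $km$ has reactance $x_{km} > 0$. The bus susceptance matrix $\hat B$ is defined by $\hat B_{kk} = \sum_{km \ni k} 1/x_{km}$ (sum over lines incident to $k$), $\hat B_{km} = -1/x_{km}$ if $km$ is a line, and $\hat B_{km} = 0$ otherwise. *)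

From HB Require Import structures.
From mathcomp Require Import all_boot all_order all_algebra.
Set Implicit Arguments. Unset Strict Implicit. Unset Printing Implicit Defensive.
Import Order.TTheory GRing.Theory Num.Theory.
Local Open Scope ring_scope.

(* A power network: buses form a finite type N, lines are given by a
   symmetric irreflexive adjacency relation [e] (simple graph), and each
   line km has reactance [x k m] (symmetric, > 0 on lines). *)
Definition simple_graph (N : finType) (e : rel N) : Prop :=
  (forall k m, e k m = e m k) /\ (forall k, ~~ e k k).

Definition connected_graph (N : finType) (e : rel N) : Prop :=
  forall k m, connect e k m.

Definition valid_reactance (R : realFieldType) (N : finType) (e : rel N)
  (x : N -> N -> R) : Prop :=
  (forall k m, x k m = x m k) /\ (forall k m, e k m -> 0 < x k m).

Definition Bhat (R : realFieldType) (N : finType) (e : rel N)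
  (x : N -> N -> R) (k m : N) : R :=
  if k == m then \sum_(j | e k j) (x k j)^-1
  else if e k m then - (x k m)^-1 else 0.

Definition Bmul (R : realFieldType) (N : finType) (e : rel N)
  (x : N -> N -> R) (theta : N -> R) (k : N) : R :=
  \sum_m Bhat e x k m * theta m.

Definition every_path_through (N : finType) (e : rel N) (s k t : N) : Prop :=
  forall p : seq N, path e s p -> last s p = k -> t \in s :: p.

(* Let u i := (thetah i - thetah t) - (theta i - theta t). By linearity, B-hat u is
   the injection delta, so u is harmonic (zero weighted Laplacian) at every bus
   other than s and t, and u t = 0. On the component C of k in the network with
   t deleted, u is therefore harmonic (s is not in C), and the only neighbour of
   C outside C is t. Extending u by 0 outside C gives a function v whose Dirichlet
   energy sum_i v i (L v) i vanishes, so v is constant along lines; by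
   connectivity v k = v t = 0, i.e. u k = 0. *)
From HB Require Import structures.
From mathcomp Require Import all_boot all_order all_algebra.
From mathcomp Require Import ring.
Import Order.TTheory GRing.Theory Num.Theory.
Local Open Scope ring_scope.

Lemma connect_eq_fun {N : finType} {T : eqType} {e : rel N} {f : N -> T} :
  (forall i j, e i j -> f i = f j) -> forall a b, connect e a b -> f a = f b.
Proof.
move=> f_edge a b; have cl : closed e [pred i | f i == f a].
  by move=> i j /f_edge; rewrite !inE => ->.
by move/(closed_connect cl); rewrite !inE eqxx => /esym/eqP.
Qed.

Definition del_vertex {N : finType} (e : rel N) (t : N) : rel N :=
  [rel a b | [&& e a b, a != t & b != t]].

Section Laplacian.

Context {R : realFieldType} {N : finType} (c : N -> N -> R).

Definition laplacian (f : N -> R) (i : N) : R := \sum_j c i j * (f i - f j).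

Lemma laplacian_sub_shift (f g : N -> R) (a b : R) (i : N) :
  laplacian (fun j => (f j - a) - (g j - b)) i = laplacian f i - laplacian g i.
Proof. by rewrite /laplacian -sumrB; apply: eq_bigr => j _; ring. Qed.

Hypothesis c_sym : forall i j, c i j = c j i.

Lemma dirichlet_energyE (f : N -> R) :
  \sum_i \sum_j c i j * (f i - f j) ^+ 2 = (\sum_i f i * laplacian f i) *+ 2.
Proof.
have half : \sum_i f i * laplacian f i = \sum_i \sum_j c i j * f i * (f i - f j).
  by apply: eq_bigr => i _; rewrite /laplacian mulr_sumr; apply: eq_bigr => j _; ring.
have swap : \sum_i \sum_j c i j * f j * (f j - f i) = \sum_i f i * laplacian f i.
  rewrite half exchange_big /=.
  by apply: eq_bigr => i _; apply: eq_bigr => j _; rewrite c_sym.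
rewrite mulr2n -{2}swap half -big_split /=.
by apply: eq_bigr => i _; rewrite -big_split /=; apply: eq_bigr => j _; ring.
Qed.

Hypothesis c_ge0 : forall i j, 0 <= c i j.

Lemma dirichlet_form_eq0 (f : N -> R) :
  \sum_i f i * laplacian f i = 0 -> forall i j, c i j != 0 -> f i = f j.
Proof.
move=> form0 i j cij.
have term_ge0 i' j' : 0 <= c i' j' * (f i' - f j') ^+ 2 by rewrite mulr_ge0 ?sqr_ge0.
have energy0 : \sum_i \sum_j c i j * (f i - f j) ^+ 2 = 0.
  by rewrite dirichlet_energyE form0 mul0rn.
have row0 : \sum_j c i j * (f i - f j) ^+ 2 = 0.
  by apply: (psumr_eq0P _ energy0) => // i' _; apply: sumr_ge0.
have /eqP := psumr_eq0P (i := j) (fun j' _ => term_ge0 i j') row0 isT.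
by rewrite mulf_eq0 (negbTE cij) sqrf_eq0 subr_eq0 => /eqP.
Qed.

Variable e : rel N.

Hypothesis c_supp : forall i j, (c i j != 0) = e i j.

Lemma harmonic_pocket_eq0 (u : N -> R) (t k : N) :
  connected_graph e -> u t = 0 ->
  (forall i, connect (del_vertex e t) k i -> i != t -> laplacian u i = 0) ->
  u k = 0.
Proof.
move=> conn ut harm.
pose v i := if connect (del_vertex e t) k i then u i else 0.
have vt : v t = 0 by rewrite /v ut if_same.
have lap_v i : connect (del_vertex e t) k i -> i != t -> laplacian v i = laplacian u i.
  move=> Ci nit; apply: eq_bigr => j _.
  have [->|cij] := eqVneq (c i j) 0; first by rewrite !mul0r.
  have [->|njt] := eqVneq j t; first by rewrite vt ut /v Ci.
  have Cj : connect (del_vertex e t) k j.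
    by apply: connect_trans Ci (connect1 _); rewrite /del_vertex /= -c_supp cij nit njt.
  by rewrite /v Ci Cj.
have form0 : \sum_i v i * laplacian v i = 0.
  apply: big1 => i _; rewrite /v.
  case: ifP => [Ci|]; last by rewrite mul0r.
  have [->|nit] := eqVneq i t; first by rewrite ut mul0r.
  by rewrite -/v lap_v // harm // mulr0.
have v_edge i j : e i j -> v i = v j.
  by rewrite -c_supp; apply: dirichlet_form_eq0.
by move: (connect_eq_fun v_edge k t (conn k t)); rewrite vt /v connect0.
Qed.

End Laplacian.

Lemma del_vertex_sym {N : finType} {e : rel N} {t : N} :
  symmetric e -> symmetric (del_vertex e t).
Proof. by move=> e_sym a b; rewrite /del_vertex /= e_sym [(a != t) && _]andbC. Qed.

Lemma path_del_vertex_notin {N : finType} {e : rel N} {t a : N} {p : seq N} :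
  path (del_vertex e t) a p -> t \notin p.
Proof.
elim: p a => [|b p IHp] a //= /andP[/and3P[_ _ bt] pth].
by rewrite in_cons negb_or eq_sym bt (IHp b).
Qed.

Lemma every_path_through_disconnect (N : finType) (e : rel N) (s k t : N) :
  symmetric e -> s != t -> every_path_through e s k t ->
  ~~ connect (del_vertex e t) k s.
Proof.
move=> e_sym snt through; apply/negP.
rewrite (sym_connect_sym (del_vertex_sym e_sym)) => /connectP[p pth kE].
have sub : subrel (del_vertex e t) e by move=> a b /and3P[].
move: (through p (sub_path sub pth) (esym kE)).
by rewrite in_cons eq_sym (negbTE snt) (negbTE (path_del_vertex_notin pth)).
Qed.

Definition conductance {R : realFieldType} {N : finType} (e : rel N)
  (x : N -> N -> R) (i j : N) : R := if e i j then (x i j)^-1 else 0.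

Section Susceptance.

Context {R : realFieldType} {N : finType} {e : rel N} {x : N -> N -> R}.
Hypotheses (e_sg : simple_graph e) (x_valid : valid_reactance e x).

Lemma conductance_sym i j : conductance e x i j = conductance e x j i.
Proof. by case: e_sg x_valid => e_sym _ [x_sym _]; rewrite /conductance e_sym x_sym. Qed.

Lemma conductance_ge0 i j : 0 <= conductance e x i j.
Proof.
case: x_valid => _ x_pos; rewrite /conductance.
by case: ifP => // /x_pos/ltW; rewrite invr_ge0.
Qed.

Lemma conductance_neq0 i j : (conductance e x i j != 0) = e i j.
Proof.
case: x_valid => _ x_pos; rewrite /conductance.
by case: ifP => [/x_pos/lt0r_neq0|]; rewrite ?eqxx // invr_eq0.
Qed.

Lemma Bhat_conductance i m :
  Bhat e x i m = (i == m)%:R * \sum_j conductance e x i j - conductance e x i m.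
Proof.
case: e_sg => _ e_irr; rewrite /Bhat /conductance -big_mkcond /=.
have [<-|nim] := eqVneq i m; first by rewrite (negbTE (e_irr i)) mul1r subr0.
by rewrite mul0r sub0r; case: (e i m); rewrite ?oppr0.
Qed.

Lemma Bmul_laplacian (f : N -> R) (i : N) :
  Bmul e x f i = laplacian (conductance e x) f i.
Proof.
rewrite /Bmul /laplacian; under eq_bigr do rewrite Bhat_conductance mulrBl.
set D := \sum_j conductance e x i j.
have diag : \sum_m (i == m)%:R * D * f m = D * f i.
  rewrite (bigD1 i) //= eqxx mul1r big1 ?addr0 // => m.
  by rewrite eq_sym => /negbTE->; rewrite !mul0r.
by rewrite sumrB diag /D mulr_suml -sumrB; apply: eq_bigr => j _; rewrite mulrBr.
Qed.

End Susceptance.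

Theorem lemma3 (R : realFieldType) (N : finType) (e : rel N)
  (x : N -> N -> R) (gens : {set N})
  (Pg Pd theta thetah : N -> R) (s t k : N) (Gamma : R) :
  simple_graph e -> connected_graph e -> valid_reactance e x ->
  (forall i, Bmul e x theta i = Pg i - Pd i) ->
  s \in gens -> t \in gens -> s != t -> 0 < Gamma ->
  (forall i, Bmul e x thetah i =
     Pg i + (if i == s then Gamma else if i == t then - Gamma else 0) - Pd i) ->
  k != t -> every_path_through e s k t ->
  thetah k - thetah t = theta k - theta t.
Proof.
move=> e_sg conn x_valid flow _ _ snt _ flowh _ through.
pose u i := (thetah i - thetah t) - (theta i - theta t).
have lap_u i : laplacian (conductance e x) u i =
    if i == s then Gamma else if i == t then - Gamma else 0.
  by rewrite laplacian_sub_shift -!(Bmul_laplacian e_sg) flowh flow; ring.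
have ut : u t = 0 by rewrite /u !subrr.
have s_outside : ~~ connect (del_vertex e t) k s.
  by apply: every_path_through_disconnect snt through; case: e_sg.
apply/eqP; rewrite -subr_eq0; apply/eqP.
apply: (harmonic_pocket_eq0 _ (conductance_sym e_sg x_valid) (conductance_ge0 x_valid)
          _ (conductance_neq0 x_valid) u t k conn ut) => i Ci nit.
rewrite lap_u (negbTE nit); case: eqVneq => // is_s.
by move: s_outside; rewrite -is_s Ci.
Qed.
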